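(* For every integer $n\ge 54$, the number of arrays $\mathbf{X}\in\{0,1\}^{n\times n}$ with $|\mathbb{D}_{1,1}(\mathbf{X})|<\frac{n^2}{2}$ is at most $\sqrt{2}\cdot 2^{n^2-3n}$.
   Context: $\mathbb{D}_{1,1}(\mathbf{X})$ denotes the set of distinct $(n-1)\times(n-1)$ arrays obtainable from $\mathbf{X}$ by deleting one row and one column. (Such arrays are called bad in the paper, and the set of them is denoted $\mathcal{B}_n$.) *)

From HB Require Import structures.
From mathcomp Require Import all_boot all_order all_algebra.
Set Implicit Arguments. Unset Strict Implicit. Unset Printing Implicit Defensive.
Import Order.TTheory GRing.Theory Num.Theory.

Definition D11 (n : nat) (X : 'M[bool]_n) : {set 'M[bool]_(n.-1, n.-1)} :=
  [set row' i (col' j X) | i : 'I_n, j : 'I_n].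

From HB Require Import structures.
From mathcomp Require Import all_boot all_order all_algebra.
From mathcomp Require Import zify.
Set Implicit Arguments. Unset Strict Implicit. Unset Printing Implicit Defensive.
Import Order.TTheory GRing.Theory Num.Theory.

(* If deleting (i, j) and (i', j') with i < i' from X gives the same array, then
   row i' with column j removed equals row i' - 1 with column j' removed: i' is a
   near-duplicate row (near-duplicate columns are those of the transpose).  Away from
   near-duplicate rows and columns the deletion map is injective, so
   |D11 X| >= (n - #rows) (n - #cols), and |D11 X| < n^2/2 forces five near-duplicate
   rows or five near-duplicate columns once n >= 14.  Fixing five near-duplicate rows
   and their two deleted columns determines 5(n - 1) entries of X from the rows above,
   so at most n^15 2^(n^2 - 5(n - 1)) arrays have five near-duplicate rows.  Adding the
   same count for columns stays below 2^(n^2 - 3n) as soon as 64 n^15 <= 4^n, which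
   holds for n >= 54. *)

Lemma card_bigcup_leq (I T : finType) (P : pred I) (F : I -> {set T}) :
  #|\bigcup_(i | P i) F i| <= \sum_(i | P i) #|F i|.
Proof.
elim/big_rec2: _ => [|i m U _ le_U_m]; first by rewrite cards0.
by rewrite (leq_trans (leq_card_setU _ _).1) ?leq_add2l.
Qed.

Lemma card_determined_leq m n (S : {set 'M[bool]_(m, n)}) (F : {set 'I_m * 'I_n}) :
  {in S &, forall X Y : 'M_(m, n), {in F, forall p, X p.1 p.2 = Y p.1 p.2} -> X = Y} ->
  #|S| <= 2 ^ #|F|.
Proof.
move=> detF; pose trace (X : 'M[bool]_(m, n)) := [set p in F | X p.1 p.2].
have trace_inj : {in S &, injective trace}.
  move=> X Y XS YS eqXY; apply: detF => // p pF.
  by apply/eqP; move/setP/(_ p): eqXY; rewrite !inE pF /= => /eqP.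
rewrite -card_powerset -(card_in_imset trace_inj); apply: subset_leq_card.
apply/subsetP => _ /imsetP[X _ ->]; rewrite powersetE.
by apply/subsetP => p; rewrite inE => /andP[].
Qed.

Lemma expSn_mul_subn_leq n k : n.+1 ^ k * (n - k) <= n ^ k.+1.
Proof.
elim: k => [|k IHk]; first by rewrite expn0 mul1n subn0 expn1.
have step : n.+1 * (n - k.+1) <= (n - k) * n by nia.
rewrite expnS [n ^ k.+2]expnS.
move: IHk step; move: (n.+1 ^ k) (n ^ k.+1) => a b IHk step; nia.
Qed.

Lemma expSn_leq_4expn n k : 4 * k <= 3 * n -> n.+1 ^ k <= 4 * n ^ k.
Proof.
case: n => [|n] le_k_n; first by have -> : k = 0 by lia.
rewrite -(@leq_pmul2r n.+1) // -mulnA -expnSr.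
apply: leq_trans (leq_mul (leqnn 4) (expSn_mul_subn_leq _ _)).
by rewrite mulnCA leq_mul2l; apply/orP; right; lia.
Qed.

Lemma exp15_leq_exp4 n : 54 <= n -> 64 * n ^ 15 <= 4 ^ n.
Proof.
elim: n => // n IHn; rewrite leq_eqVlt => /orP[/eqP[<-]|lt53n].
  apply: (@leq_trans (2 ^ 6 * (2 ^ 6) ^ 15)); first by rewrite leq_mul2l leq_exp2r.
  by rewrite -expnM -expnD -[4]/(2 ^ 2) -expnM leq_exp2l.
rewrite [4 ^ _]expnS (leq_trans _ (leq_mul (leqnn 4) (IHn lt53n))) //.
by rewrite mulnCA leq_mul2l expSn_leq_4expn ?orbT //; lia.
Qed.

Section NearDuplicates.
Variable n : nat.
Implicit Types X Y : 'M[bool]_n.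

Definition near_dup_row X (r j j' : 'I_n) : bool :=
  [exists r0 : 'I_n, (val r == r0.+1) && (col' j (row r X) == col' j' (row r0 X))].

Definition near_dup_rows X : {set 'I_n} :=
  [set r | [exists j, exists j', near_dup_row X r j j']].

Definition near_dup_cols X : {set 'I_n} := near_dup_rows X^T.

Lemma mem_near_dup_rows X r j j' : near_dup_row X r j j' -> r \in near_dup_rows X.
Proof. by move=> dup; rewrite inE; apply/existsP; exists j; apply/existsP; exists j'. Qed.

Lemma near_dup_row_of_D11 X (i i' j j' : 'I_n) : i < i' ->
  row' i (col' j X) = row' i' (col' j' X) -> near_dup_row X i' j j'.
Proof.
move=> lt_ii' eqD; have lt_pred : i'.-1 < n.-1 by move: (ltn_ord i'); lia.
have lt_pred' : i'.-1 < n by move: (ltn_ord i'); lia.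
apply/existsP; exists (Ordinal lt_pred'); rewrite /=; apply/andP; split; first by lia.
apply/eqP/rowP => c.
have := congr1 (fun M : 'M_n.-1 => M (Ordinal lt_pred) c) eqD; rewrite !mxE.
have -> : lift i (Ordinal lt_pred) = i' by apply: val_inj; rewrite /= /bump; lia.
suff -> : lift i' (Ordinal lt_pred) = Ordinal lt_pred' by [].
by apply: val_inj; rewrite /= /bump; lia.
Qed.

Lemma near_dup_col_of_D11 X (i j j' : 'I_n) : j < j' ->
  row' i (col' j X) = row' i (col' j' X) -> j' \in near_dup_cols X.
Proof.
move=> lt_jj' eqD; apply: (mem_near_dup_rows (j := i) (j' := i)).
apply: near_dup_row_of_D11 lt_jj' _.
have row'_col'C k l (A : 'M[bool]_n) : row' k (col' l A) = col' l (row' k A).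
  by apply/matrixP => ? ?; rewrite !mxE.
by rewrite -!tr_row' -!tr_col' -!row'_col'C eqD.
Qed.

Lemma D11_deletion_inj X :
  {in setX (~: near_dup_rows X) (~: near_dup_cols X) &,
    injective (fun p : 'I_n * 'I_n => row' p.1 (col' p.2 X))}.
Proof.
move=> [i j] [i' j'] /setXP[/= Ri Cj] /setXP[/= Ri' Cj'] /= eqD.
have [lt_ii'|lt_i'i|/val_inj eq_ii'] := ltngtP i i'.
- by move: Ri'; rewrite inE (mem_near_dup_rows (near_dup_row_of_D11 lt_ii' eqD)).
- by move: Ri; rewrite inE (mem_near_dup_rows (near_dup_row_of_D11 lt_i'i (esym eqD))).
subst i'; have [lt_jj'|lt_j'j|/val_inj -> //] := ltngtP j j'.
- by move: Cj'; rewrite inE (near_dup_col_of_D11 lt_jj' eqD).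
- by move: Cj; rewrite inE (near_dup_col_of_D11 lt_j'j (esym eqD)).
Qed.

Lemma card_D11_geq X : (n - #|near_dup_rows X|) * (n - #|near_dup_cols X|) <= #|D11 X|.
Proof.
have card_compl (A : {set 'I_n}) : #|~: A| = n - #|A|.
  by rewrite (cardsCs (~: A)) setCK card_ord.
rewrite -!card_compl -cardsX -(card_in_imset (@D11_deletion_inj X)).
apply: subset_leq_card; apply/subsetP => _ /imsetP[[i j] _ ->].
by apply/imset2P; exists i j.
Qed.

Section Patterns.
Variables (k : nat) (t : {ffun 'I_k -> 'I_n * 'I_n * 'I_n}).

Definition near_dup_pattern : {set 'M[bool]_n} :=
  [set X | [forall l, near_dup_row X (t l).1.1 (t l).1.2 (t l).2]].

Definition forced_entries : {set 'I_n * 'I_n} :=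
  [set ((t q.1).1.1, lift (t q.1).1.2 q.2) | q : 'I_k * 'I_n.-1].

Lemma near_dup_pattern_determined :
  {in near_dup_pattern &, forall X Y,
    {in ~: forced_entries, forall p, X p.1 p.2 = Y p.1 p.2} -> X = Y}.
Proof.
move=> X Y; rewrite !inE => /forallP dupX /forallP dupY eq_free.
suff eq_rows m (r : 'I_n) c : r < m -> X r c = Y r c.
  by apply/matrixP => r c; apply: (eq_rows r.+1).
elim: m r c => // m IHm r c.
have [/imsetP[[l c'] _ [-> ->]]|free] := boolP ((r, c) \in forced_entries); last first.
  by move=> _; apply: (eq_free (r, c)); rewrite inE.
move: (dupX l) (dupY l) => /existsP[r0 /andP[/eqP r_r0 /eqP/rowP/(_ c') rowX]].
move=> /existsP[r1 /andP[/eqP r_r1 /eqP/rowP/(_ c') rowY]].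
have eq_r10 : r1 = r0 by apply: val_inj; move: r_r0 r_r1 => /= -> [].
move: rowX rowY; rewrite eq_r10 !mxE => -> ->.
by rewrite r_r0 ltnS => /IHm.
Qed.

Hypothesis t_rows_inj : injective (fun l => (t l).1.1).

Lemma card_forced_entries : #|forced_entries| = k * n.-1.
Proof.
rewrite card_imset ?cardsT ?card_prod ?card_ord //.
move=> [l c] [l' c'] /= [/t_rows_inj eq_ll']; subst l'.
by move=> /(can_inj (bumpK _))/val_inj ->.
Qed.

Lemma card_near_dup_pattern : #|near_dup_pattern| <= 2 ^ (n * n - k * n.-1).
Proof.
have -> : n * n - k * n.-1 = #|~: forced_entries|.
  by rewrite (cardsCs (~: _)) setCK card_prod card_ord card_forced_entries.
exact: card_determined_leq near_dup_pattern_determined.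
Qed.
End Patterns.

Lemma near_dup_pattern_cover k X : k <= #|near_dup_rows X| ->
  exists2 t : {ffun 'I_k -> 'I_n * 'I_n * 'I_n},
    injectiveb (fun l => (t l).1.1) & X \in near_dup_pattern t.
Proof.
move=> le_k; pose rk (l : 'I_k) := enum_val (widen_ord le_k l).
have /fin_all_exists[f rk_f] : forall l, exists p : 'I_n * 'I_n * 'I_n,
    p.1.1 = rk l /\ near_dup_row X p.1.1 p.1.2 p.2.
  move=> l; have := enum_valP (widen_ord le_k l).
  by rewrite inE => /existsP[j /existsP[j' dup]]; exists (rk l, j, j').
exists (finfun f); last by rewrite inE; apply/forallP => l; rewrite ffunE; case: (rk_f l).
apply/injectiveP => l l'; rewrite !ffunE (rk_f l).1 (rk_f l').1.
by rewrite /rk => /enum_val_inj/(congr1 val) /= /val_inj.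
Qed.

Lemma card_many_near_dup_rows k :
  #|[set X | k <= #|near_dup_rows X|]| <= n ^ (3 * k) * 2 ^ (n * n - k * n.-1).
Proof.
pose rows_inj (t : {ffun 'I_k -> 'I_n * 'I_n * 'I_n}) := injectiveb (fun l => (t l).1.1).
have cover : [set X | k <= #|near_dup_rows X|] \subset
    \bigcup_(t | rows_inj t) near_dup_pattern t.
  apply/subsetP => X; rewrite inE => /near_dup_pattern_cover[t inj_t Xt].
  by apply/bigcupP; exists t.
apply: leq_trans (subset_leq_card cover) _; apply: leq_trans (card_bigcup_leq _ _) _.
apply: (@leq_trans (\sum_(t | rows_inj t) 2 ^ (n * n - k * n.-1))).
  by apply: leq_sum => t /injectiveP; apply: card_near_dup_pattern.
rewrite sum_nat_const leq_mul2r (leq_trans (max_card _)) ?orbT //.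
by rewrite card_ffun !card_prod !card_ord expnM -mulnA.
Qed.

Lemma card_many_near_dup_cols k :
  #|[set X | k <= #|near_dup_cols X|]| = #|[set X | k <= #|near_dup_rows X|]|.
Proof.
rewrite -[in RHS](card_preimset _ (@trmx_inj _ n n)).
by apply: eq_card => X; rewrite !inE.
Qed.

Lemma many_near_dups_of_small_D11 X : 14 <= n -> 2 * #|D11 X| < n ^ 2 ->
  (5 <= #|near_dup_rows X|) || (5 <= #|near_dup_cols X|).
Proof.
move=> le14n small; apply/negPn/negP.
rewrite negb_or -!ltnNge => /andP[few_rows few_cols].
have le_D11 := card_D11_geq X.
have : (n - 4) * (n - 4) <= (n - #|near_dup_rows X|) * (n - #|near_dup_cols X|).
  by apply: leq_mul; apply: leq_sub2l; rewrite -ltnS.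
move: le_D11 small; rewrite -mulnn.
move: (#|D11 X|) ((n - _) * (n - _)) => d p; nia.
Qed.
End NearDuplicates.

Lemma exp15_mul_exp2_leq n : 54 <= n ->
  2 * (n ^ 15 * 2 ^ (n * n - 5 * n.-1)) <= 2 ^ (n ^ 2 - 3 * n).
Proof.
move=> le54n.
have -> : n ^ 2 - 3 * n = (n * n - 5 * n.-1) + (2 * n - 5) by rewrite -mulnn; nia.
rewrite expnD mulnA [X in _ <= X]mulnC leq_mul2r; apply/orP; right.
rewrite -(@leq_pmul2l (2 ^ 5)) // mulnA -expnD subnKC; last by lia.
by rewrite expnM exp15_leq_exp4.
Qed.

Local Open Scope ring_scope.

Theorem lemma4 (R : rcfType) (n : nat) (hn : (54 <= n)%N) :
  (#|[set X : 'M[bool]_n | (2 * #|D11 X| < n ^ 2)%N]|%:R : R)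
    <= Num.sqrt 2 * 2 ^+ (n ^ 2 - 3 * n)%N.
Proof.
have cover : [set X : 'M[bool]_n | (2 * #|D11 X| < n ^ 2)%N] \subset
    [set X | (5 <= #|near_dup_rows X|)%N] :|: [set X | (5 <= #|near_dup_cols X|)%N].
  apply/subsetP => X; rewrite !inE => /many_near_dups_of_small_D11.
  by apply; apply: leq_trans hn.
have card_small : (#|[set X : 'M[bool]_n | (2 * #|D11 X| < n ^ 2)%N]|
    <= 2 ^ (n ^ 2 - 3 * n))%N.
  apply: leq_trans (subset_leq_card cover) _.
  rewrite (leq_trans (leq_card_setU _ _).1) // card_many_near_dup_cols addnn -mul2n.
  by apply: leq_trans (exp15_mul_exp2_leq hn); rewrite leq_mul2l card_many_near_dup_rows.
apply: (@le_trans _ _ (2 ^ (n ^ 2 - 3 * n))%N%:R); first by rewrite ler_nat.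
by rewrite natrX ler_peMl ?exprn_ge0 // -{1}sqrtr1 ler_sqrt ?ler1n.
Qed.
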